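(* Let $T$ be a rooted binary phylogenetic $X$-tree with strictly positive edge lengths $\lambda_T(e)$ such that the ranking $\pi_T$ is strict and reversible with respect to some $X'\subset X$. Let $k,d>0$. If all edge lengths are multiplied by $k$ and then $d$ is added to the length of every pendant edge, the resulting edge lengths again give a strict ranking that is reversible with respect to $X'$.
   Context: A rooted binary phylogenetic $X$-tree ($X$ finite) is a rooted tree whose root $\rho$ has in-degree 0 and out-degree 2, all edges directed away from $\rho$, all other interior vertices have in-degree 1 and out-degree 2, and whose leaves are bijectively labelled by $X$. Edges incident to leaves are pendant edges. Every edge $e$ has a strictly positive length $\lambda_e$. The Fair Proportion index of $x\in X$ is $FP_T(x)=\sum_{e\in P(T;\rho,x)}\lambda_e/D_e$, where $P(T;\rho,x)$ is the path from $\rho$ to $x$ and $D_e$ is the number of leaves descended from $e$. For $Y\subseteq X$, the induced subtree $T_Y$ is obtained from the minimal subtree of $T$ connecting $Y$ by suppressing all non-root vertices of in- and out-degree 1, adding the lengths of merged edges; if the root then has out-degree 1, it and its incident edge are deleted. The ranking $\pi_T$ is strict if all values $FP_T(x)$ are pairwise distinct. For $X'\subset X$, $\widetilde X=X\setminus X'$ and $\widetilde T=T_{\widetilde X}$, a strict ranking $\pi_T$ is reversible with respect to $X'$ if for all distinct $x_i,x_j\in\widetilde X$, $FP_T(x_i)>FP_T(x_j)$ implies $FP_{\widetilde T}(x_i)<FP_{\widetilde T}(x_j)$. *)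

From HB Require Import structures.
From mathcomp Require Import all_boot all_order all_algebra.
Set Implicit Arguments. Unset Strict Implicit. Unset Printing Implicit Defensive.
Import Order.TTheory GRing.Theory Num.Theory.
Local Open Scope ring_scope.

(* A rooted binary tree with leaves labelled in X and real edge lengths.
   [Node l a r b] is an interior vertex (or the root) with two outgoing edges:
   the edge to the subtree [l] has length [a], the edge to [r] has length [b].
   The root has no incoming edge. *)
Inductive btree (X : Type) (R : Type) : Type :=
  | Leaf of X
  | Node of btree X R & R & btree X R & R.
Arguments Leaf {X R}.
Arguments Node {X R}.

Section Trees.
Variables (X : eqType) (R : realFieldType).

Fixpoint leaves (t : btree X R) : seq X :=
  match t with
  | Leaf x => [:: x]
  | Node l _ r _ => leaves l ++ leaves r
  end.

Fixpoint pos_lengths (t : btree X R) : bool :=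
  match t with
  | Leaf _ => true
  | Node l a r b => [&& 0 < a, 0 < b, pos_lengths l & pos_lengths r]
  end.

(* rooted binary phylogenetic X-tree with X = leaves t: the root has
   out-degree 2 and the leaf labelling is injective *)
Definition phylo_tree (t : btree X R) : bool :=
  uniq (leaves t) && (if t is Node _ _ _ _ then true else false).

(* Fair Proportion index: sum over edges e on the root-to-x path of
   lambda_e / D_e, D_e = number of leaves below e. *)
Fixpoint FP (t : btree X R) (x : X) : R :=
  match t with
  | Leaf _ => 0
  | Node l a r b =>
      if x \in leaves l then a / (size (leaves l))%:R + FP l x
      else if x \in leaves r then b / (size (leaves r))%:R + FP r x
      else 0
  end.

Definition strict_ranking (t : btree X R) : Prop :=
  forall x y, x \in leaves t -> y \in leaves t -> x != y -> FP t x != FP t y.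

(* Restriction to the leaves satisfying P, with suppression of degree-2
   vertices (lengths of merged edges added).  Returns the restricted
   subtree together with the extra length to be added to its incoming edge. *)
Fixpoint restrict (P : pred X) (t : btree X R) : option (btree X R * R) :=
  match t with
  | Leaf x => if P x then Some (Leaf x, 0) else None
  | Node l a r b =>
      match restrict P l, restrict P r with
      | Some (l', e), Some (r', f) => Some (Node l' (a + e) r' (b + f), 0)
      | Some (l', e), None => Some (l', a + e)
      | None, Some (r', f) => Some (r', b + f)
      | None, None => None
      end
  end.

(* induced subtree T_Y for Y = {x in leaves t | P x}; if the root ends up with
   out-degree 1 it is deleted together with its incident edge (the extra
   length at the top is discarded). *)
Definition induced (P : pred X) (t : btree X R) : option (btree X R) :=
  omap fst (restrict P t).

Definition Xtilde (t : btree X R) (X' : seq X) : pred X :=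
  fun x => (x \in leaves t) && (x \notin X').

Definition reversible (t : btree X R) (X' : seq X) : Prop :=
  strict_ranking t /\
  forall t', induced (Xtilde t X') t = Some t' ->
  forall xi xj, Xtilde t X' xi -> Xtilde t X' xj -> xi != xj ->
    FP t xj < FP t xi -> FP t' xi < FP t' xj.

Fixpoint transform (k d : R) (t : btree X R) : btree X R :=
  match t with
  | Leaf x => Leaf x
  | Node l a r b =>
      Node (transform k d l) (k * a + (if l is Leaf _ then d else 0))
           (transform k d r) (k * b + (if r is Leaf _ then d else 0))
  end.

End Trees.

From mathcomp Require Import all_boot all_order all_algebra.
From mathcomp Require Import ring.
Import Order.TTheory GRing.Theory Num.Theory.
Local Open Scope ring_scope.

(* Scaling all edge lengths by k > 0 and adding d to every pendant edge acts
   on the Fair Proportion index as the increasing affine map v |-> k v + d: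
   on the path from the root to a leaf x only the pendant edge of x changes
   beyond scaling, and it is counted with weight 1/D_e = 1.  The same holds
   for the induced subtree on X \ X', because taking induced subtrees
   commutes with the transformation: suppressing a vertex adds lengths, and
   addition commutes with scaling, while the bonus d stays on the pendant
   edge of the surviving leaf.  An increasing map applied to the FP values of
   both T and its induced subtree preserves every strict comparison, hence
   both strictness and reversibility of the ranking. *)

Section Transform.
Variables (X : eqType) (R : realFieldType).

Lemma restrict_None {P : pred X} {t : btree X R} :
  restrict P t = None -> filter P (leaves t) = [::].
Proof.
elim: t => [y|l IHl a r IHr b] /=; first by case: (P y).
rewrite filter_cat.
case: (restrict P l) IHl => [[? ?]|]; case: (restrict P r) IHr => [[? ?]|] //.
by move=> -> // -> .
Qed.

Lemma leaves_restrict (P : pred X) (t t' : btree X R) (e : R) :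
  restrict P t = Some (t', e) -> leaves t' = filter P (leaves t).
Proof.
elim: t t' e => [y|l IHl a r IHr b] t' e /=.
  by case: (P y) => // -[<- _].
rewrite filter_cat.
case El: (restrict P l) => [[l' e1]|]; case Er: (restrict P r) => [[r' f]|] //.
- by move=> [<- _] /=; rewrite (IHl _ _ El) (IHr _ _ Er).
- by move=> [<- _]; rewrite (IHl _ _ El) (restrict_None Er) cats0.
- by move=> [<- _]; rewrite (IHr _ _ Er) (restrict_None El).
Qed.

Lemma leaves_induced {P : pred X} {t t' : btree X R} :
  induced P t = Some t' -> leaves t' = filter P (leaves t).
Proof.
rewrite /induced; case E: restrict => [[u e]|] //= [<-].
exact: leaves_restrict E.
Qed.

Variables (k d : R).

Definition pendant_bonus (t : btree X R) : R := if t is Leaf _ then d else 0.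

Lemma leaves_transform (t : btree X R) : leaves (transform k d t) = leaves t.
Proof. by elim: t => //= l -> a r -> b. Qed.

Lemma Xtilde_transform (t : btree X R) (X' : seq X) :
  Xtilde (transform k d t) X' = Xtilde t X'.
Proof. by rewrite /Xtilde leaves_transform. Qed.

(* FP is transformed affinely; unless [t] is a single leaf, the root-to-leaf
   path ends with a pendant edge, which contributes the bonus d. *)
Lemma FP_transform (t : btree X R) (x : X) : x \in leaves t ->
  FP (transform k d t) x = k * FP t x + (d - pendant_bonus t).
Proof.
elim: t => [y|l IHl a r IHr b] /=; first by rewrite mulr0 subrr addr0.
rewrite !leaves_transform mem_cat.
case: ifP => [xl _|xNl /= xr]; last rewrite xr IHr //.
  rewrite IHl //; case: l {IHl} xl => [y|l1 a1 r1 b1] _;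
    by rewrite /pendant_bonus /= ?divr1; ring.
by case: r {IHr} xr => [y|l1 a1 r1 b1] _;
  rewrite /pendant_bonus /= ?divr1; ring.
Qed.

(* Restriction commutes with the transformation: the restricted subtree is
   transformed, and its pending extra length is scaled, with the pendant bonus
   moved from the old top edge to the new one. *)
Lemma restrict_transform (P : pred X) (t : btree X R) :
  restrict P (transform k d t) =
  omap (fun p => (transform k d p.1,
                  k * p.2 + pendant_bonus p.1 - pendant_bonus t))
       (restrict P t).
Proof.
rewrite /pendant_bonus.
elim: t => [y|l IHl a r IHr b] /=.
  by case: (P y) => //=; rewrite mulr0 add0r subrr.
rewrite IHl IHr {IHl IHr}.
case: (restrict P l) => [[l' e]|]; case: (restrict P r) => [[r' f]|] //=.
- rewrite mulr0 add0r subr0; congr (Some (Node _ _ _ _, _));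
    by case: l' => [?|????]; case: r' => [?|????];
       case: l => [?|????]; case: r => [?|????] /=; ring.
- by rewrite subr0; congr (Some (_, _));
    case: l' => [?|????]; case: l => [?|????] /=; ring.
- by rewrite subr0; congr (Some (_, _));
    case: r' => [?|????]; case: r => [?|????] /=; ring.
Qed.

Lemma induced_transform (P : pred X) (t : btree X R) :
  induced P (transform k d t) = omap (transform k d) (induced P t).
Proof. by rewrite /induced restrict_transform; case: restrict. Qed.

Section Positive_scaling.
Hypothesis k_gt0 : 0 < k.

Lemma FP_transform_lt (t : btree X R) (x y : X) :
  x \in leaves t -> y \in leaves t ->
  (FP (transform k d t) x < FP (transform k d t) y) = (FP t x < FP t y).
Proof. by move=> xt yt; rewrite !FP_transform // ltrD2r ltr_pM2l. Qed.

Lemma strict_ranking_transform (t : btree X R) :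
  strict_ranking t -> strict_ranking (transform k d t).
Proof.
move=> strict x y; rewrite !leaves_transform => xt yt xy.
rewrite !FP_transform // (inj_eq (addIr _)) (inj_eq (mulfI (lt0r_neq0 k_gt0))).
exact: strict.
Qed.

Lemma reversible_transform (t : btree X R) (X' : seq X) :
  reversible t X' -> reversible (transform k d t) X'.
Proof.
move=> [strict rev]; split; first exact: strict_ranking_transform.
move=> u; rewrite !Xtilde_transform induced_transform.
case Et: (induced _ t) => [t'|] //= [<-] xi xj Xi Xj xij.
have in_t x : Xtilde t X' x -> x \in leaves t by case/andP.
have in_t' x : Xtilde t X' x -> x \in leaves t'.
  by move=> Xx; rewrite (leaves_induced Et) mem_filter Xx in_t.
rewrite !FP_transform_lt ?in_t ?in_t' //.
exact: rev.
Qed.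

End Positive_scaling.

End Transform.

Theorem corollary2 (X : eqType) (R : realFieldType) (t : btree X R)
    (X' : seq X) (k d : R) :
  phylo_tree t -> pos_lengths t ->
  {subset X' <= leaves t} -> (exists x, (x \in leaves t) && (x \notin X')) ->
  strict_ranking t -> reversible t X' ->
  0 < k -> 0 < d ->
  strict_ranking (transform k d t) /\ reversible (transform k d t) X'.
Proof.
move=> _ _ _ _ strict rev k_gt0 _.
split; [exact: strict_ranking_transform | exact: reversible_transform].
Qed.
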